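(* Every independent set of size $14$ in $C_{5,14}^{\boxtimes 3}$ is Lee equivalent to $\{t\cdot(1,3,9): t\in\mathbb Z_{14}\}\subseteq\mathbb Z_{14}^3$ (arithmetic modulo $14$); in particular, up to Lee equivalence there is a unique independent set of size $14$ in $C_{5,14}^{\boxtimes 3}$.
   Context: For positive integers $q,d$ with $q\ge 2d$, the circular graph $C_{d,q}$ has vertex set $\mathbb Z_q$, two distinct vertices $x,y$ being adjacent iff $\min\{|x-y|,q-|x-y|\}<d$ (viewing $x,y$ as integers in $\{0,\dots,q-1\}$). For a graph $G=(V,E)$, $G^{\boxtimes n}$ has vertex set $V^n$, distinct $(u_i)$, $(v_i)$ adjacent iff for every $i$ either $u_i=v_i$ or $u_iv_i\in E$. An independent set is a set of pairwise non-adjacent vertices. Let $D_q$ be the dihedral group of order $2q$ acting on $\mathbb Z_q$ by $x\mapsto\pm x+c$ ($c\in\mathbb Z_q$); $D_q^n\rtimes S_n$ acts on $\mathbb Z_q^n$ by acting with $D_q$ in each coordinate separately and permuting coordinates. Sets $C,D\subseteq\mathbb Z_q^n$ are Lee equivalent if $g\cdot C=D$ for some $g\in D_q^n\rtimes S_n$. *)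

From mathcomp Require Import all_boot all_order all_algebra all_fingroup.
Unset Printing Implicit Defensive.
Import GRing.Theory.
Local Open Scope ring_scope.

(* Z_q is represented by 'Z_q; this is faithful only for q >= 2
   (all uses below have q = 14). Elements are viewed as integers
   in {0,...,q-1} via val. *)

Definition circ_dist (q : nat) (x y : 'Z_q) : nat :=
  let a := if (val x <= val y)%N then (val y - val x)%N else (val x - val y)%N in
  minn a (q - a)%nat.

Definition circ_adj (d q : nat) (x y : 'Z_q) : bool :=
  (x != y) && (circ_dist q x y < d)%nat.

Definition strong_adj (d q n : nat) (u v : {ffun 'I_n -> 'Z_q}) : bool :=
  (u != v) && [forall i, (u i == v i) || circ_adj d q (u i) (v i)].

Definition independent (d q n : nat) (S : {set {ffun 'I_n -> 'Z_q}}) : Prop :=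
  forall u v, u \in S -> v \in S -> ~~ strong_adj d q n u v.

(* The action of an element of D_q^n |x S_n : coordinate i of the image is
   (+/-) x_(s i) + c_i ; as (eps, c, s) range over all choices this gives
   exactly the maps induced by the group D_q^n |x S_n. *)
Definition lee_map (q n : nat) (eps : {ffun 'I_n -> bool}) (c : {ffun 'I_n -> 'Z_q})
  (s : 'S_n) (x : {ffun 'I_n -> 'Z_q}) : {ffun 'I_n -> 'Z_q} :=
  [ffun i => (if eps i then - x (s i) else x (s i)) + c i].

Definition lee_equiv (q n : nat) (C D : {set {ffun 'I_n -> 'Z_q}}) : Prop :=
  exists (eps : {ffun 'I_n -> bool}) (c : {ffun 'I_n -> 'Z_q}) (s : 'S_n),
    [set lee_map q n eps c s x | x in C] = D.

Definition code14 : {set {ffun 'I_3 -> 'Z_14}} :=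
  [set [ffun i : 'I_3 => (nth 0%N [:: 1; 3; 9]%N i)%:R * t] | t : 'Z_14].

From mathcomp Require Import all_boot all_order all_algebra all_fingroup zify.
Set Implicit Arguments. Unset Strict Implicit. Unset Printing Implicit Defensive.
Import GRing.Theory.

(* Call two residues of Z_14 "far" when their circular distance is at least 5;
   two vertices of the strong cube are non-adjacent iff they are far in some
   coordinate.  The proof has three parts.

   Two residues in one window {a-4, ..., a} are never far, and
      every residue lies in five windows.  Hence a set pairwise far in one of
      k given coordinates has at most 1, 2, 5, 14 elements for k = 0, 1, 2, 3
      ([card_far_code]).  For an independent set S of size 14 equality forces
      every window to hold exactly five points, so the fibres of each
      coordinate satisfy n(a) = n(a - 5); as 15 = 1 in Z_14 they all have one
      point ([fibre_singleton]).  Thus S = {P t | t} with P t = (t, _, _) and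
      the other two coordinates of P injective ([independent14_param]).
   2. Classification.  The differences P t - P 0 form a "valid table" of 14
      pairs of residues.  Up to negating and swapping the last two columns,
      an exhaustive search (by computation) shows the only valid table is
      t |-> (3t, 5t); so every valid table is t |-> (at, bt) for one of eight
      pairs (a, b) ([valid_table_linear]).
   3. Lee maps.  Each resulting set {t(1, a, b) + z} is sent onto
      {t(1, 3, 9)} by an explicit Lee map ([lin_code_lee]). *)

Definition dist14 (a b : nat) : nat :=
  let d := if a <= b then b - a else a - b in minn d (14 - d).

Definition farn (a b : nat) : bool := 5 <= dist14 a b.

Definition far (x y : 'Z_14) : bool := farn (val x) (val y).

Lemma far_circ_dist (x y : 'Z_14) : far x y = (5 <= circ_dist 14 x y).
Proof. by []. Qed.

Lemma farxx (x : 'Z_14) : far x x = false.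
Proof. by rewrite /far /farn /dist14 leqnn subnn. Qed.

Lemma Z14_forall (P : 'Z_14 -> bool) :
  all (fun n => P (inZp n)) (iota 0 14) -> forall x, P x.
Proof.
move=> H x; have := allP H (val x); rewrite mem_iota /= => /(_ (ltn_ord x)).
by rewrite valZpK.
Qed.

Lemma Z14_forall2 (P : 'Z_14 -> 'Z_14 -> bool) :
  all (fun a => all (fun b => P (inZp a) (inZp b)) (iota 0 14)) (iota 0 14) ->
  forall x y, P x y.
Proof. by move=> H x; apply: Z14_forall; move: x; apply: Z14_forall. Qed.

Lemma Z14_forall3 (P : 'Z_14 -> 'Z_14 -> 'Z_14 -> bool) :
  all (fun a => all (fun b => all (fun c => P (inZp a) (inZp b) (inZp c))
    (iota 0 14)) (iota 0 14)) (iota 0 14) ->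
  forall x y z, P x y z.
Proof. by move=> H x; apply: Z14_forall2; move: x; apply: Z14_forall. Qed.

Lemma nat14_forall2 (P : nat -> nat -> bool) :
  all (fun a => all (P a) (iota 0 14)) (iota 0 14) ->
  forall a b, a < 14 -> b < 14 -> P a b.
Proof. by move=> H a b ha hb; apply: (allP (allP H a _)); rewrite mem_iota. Qed.

Lemma far_subr (x y c : 'Z_14) : far (x - c)%R (y - c)%R = far x y.
Proof.
have /eqP // : far (x - c)%R (y - c)%R == far x y.
by move: x y c; apply: Z14_forall3; vm_compute.
Qed.

(* The window ending at a is {a - 4, ..., a}. *)
Definition in_window (a c : 'Z_14) : bool := val (a - c)%R < 5.

Lemma window_not_far (a c c' : 'Z_14) :
  in_window a c -> in_window a c' -> ~~ far c c'.
Proof.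
have /implyP H : in_window a c ==> in_window a c' ==> ~~ far c c'.
  by move: a c c'; apply: Z14_forall3; vm_compute.
by move=> /H /implyP.
Qed.

Lemma sum_Z14 (F : 'Z_14 -> nat) :
  \sum_(a : 'Z_14) F a = foldr addn 0 [seq F (inZp n) | n <- iota 0 14].
Proof.
rewrite foldrE big_map -[iota 0 14]/(index_iota 0 14) big_mkord.
by apply: eq_bigr => i _; rewrite valZpK.
Qed.

Lemma sum_in_window (c : 'Z_14) : \sum_(a : 'Z_14) in_window a c = 5.
Proof.
apply/eqP; rewrite sum_Z14; move: c.
by apply: (@Z14_forall (fun c =>
  foldr addn 0 [seq nat_of_bool (in_window (inZp n) c) | n <- iota 0 14] == 5));
  vm_compute.
Qed.

(* Windows a and a - 1 share {a - 4, ..., a - 1}; they differ by a and a - 5. *)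
Lemma window_top (a c : 'Z_14) :
  nat_of_bool (in_window a c) = (c == a) + (in_window a c && (c != a)).
Proof.
apply/eqP; move: a c.
by apply: (@Z14_forall2 (fun a c => nat_of_bool (in_window a c) ==
  (c == a) + (in_window a c && (c != a)))); vm_compute.
Qed.

Lemma window_bottom (a c : 'Z_14) :
  nat_of_bool (in_window (a - 1)%R c) = (c == a - 5)%R + (in_window a c && (c != a)).
Proof.
apply/eqP; move: a c.
by apply: (@Z14_forall2 (fun a c => nat_of_bool (in_window (a - 1)%R c) ==
  (c == a - 5)%R + (in_window a c && (c != a)))); vm_compute.
Qed.

Lemma subr15 (a : 'Z_14) : (a - 5 - 5 - 5 = a - 1)%R.
Proof.
apply/eqP; move: a.
by apply: (@Z14_forall (fun a => a - 5 - 5 - 5 == a - 1)%R); vm_compute.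
Qed.

Lemma shift5_constant (T : Type) (f : 'Z_14 -> T) :
  (forall a, f a = f (a - 5)%R) -> forall a, f a = f 0%R.
Proof.
move=> f5; have f1 a : f a = f (a - 1)%R by rewrite -subr15 -!f5.
have fk k : f (k%:R)%R = f 0%R by elim: k => [//|k IH]; rewrite -IH f1 -natr1 addrK.
by move=> a; rewrite -(natr_Zp a) fk.
Qed.

Section WindowCounting.
Variable A : finType.

Definition far_some (hs : seq (A -> 'Z_14)) (x y : A) : bool :=
  has (fun h => far (h x) (h y)) hs.

Definition far_code (hs : seq (A -> 'Z_14)) (X : {set A}) : Prop :=
  {in X &, forall x y, x != y -> far_some hs x y}.

Definition wslice (X : {set A}) (h : A -> 'Z_14) (a : 'Z_14) : {set A} :=
  [set x in X | in_window a (h x)].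

Definition fibre (X : {set A}) (h : A -> 'Z_14) (j : 'Z_14) : {set A} :=
  [set x in X | h x == j].

Lemma card_sep (X : {set A}) (P : pred A) :
  #|[set x in X | P x]| = \sum_(x in X) P x.
Proof.
rewrite -sum1_card big_mkcond [RHS]big_mkcond /=.
by apply: eq_bigr => x _; rewrite inE; case: (x \in X); case: (P x).
Qed.

Lemma sum_wslice (X : {set A}) (h : A -> 'Z_14) :
  \sum_(a : 'Z_14) #|wslice X h a| = 5 * #|X|.
Proof.
under eq_bigr => a _ do rewrite card_sep.
rewrite exchange_big /= mulnC -sum_nat_const.
by apply: eq_bigr => x _; rewrite sum_in_window.
Qed.

Lemma sum_fibre (X : {set A}) (h : A -> 'Z_14) :
  \sum_(j : 'Z_14) #|fibre X h j| = #|X|.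
Proof.
under eq_bigr => j _ do rewrite card_sep.
rewrite exchange_big /= -sum1_card; apply: eq_bigr => x _.
by rewrite -big_mkcond (eq_bigl _ _ (fun j => eq_sym _ j)) big_pred1_eq.
Qed.

(* Inside a window the coordinate h is never far, so the others must be. *)
Lemma wslice_far_code (h : A -> 'Z_14) hs X a :
  far_code (h :: hs) X -> far_code hs (wslice X h a).
Proof.
move=> Hfar x y; rewrite !inE => /andP [xX wx] /andP [yX wy] xy.
by have := Hfar x y xX yX xy; rewrite /far_some /= (negbTE (window_not_far wx wy)).
Qed.

(* Maximal size of a code in k coordinates: 1, 2, 5, 14, ... *)
Fixpoint code_bound (k : nat) : nat :=
  if k is k'.+1 then 14 * code_bound k' %/ 5 else 1.

Lemma card_far_code hs X : far_code hs X -> #|X| <= code_bound (size hs).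
Proof.
elim: hs X => [|h hs IH] X Hfar /=.
  apply/card_le1_eqP => x y xX yX; apply/eqP/negPn/negP => yx.
  by have := Hfar y x yX xX yx.
rewrite leq_divRL // mulnC -(sum_wslice X h).
apply: (@leq_trans (\sum_(a : 'Z_14) code_bound (size hs))).
  by apply: leq_sum => a _; apply/IH/wslice_far_code.
by rewrite sum_nat_const card_ord.
Qed.

Lemma wslice_full (h : A -> 'Z_14) hs X :
  far_code (h :: hs) X -> size hs = 2 -> #|X| = 14 -> forall a, #|wslice X h a| = 5.
Proof.
move=> Hfar hs2 X14.
have le5 a : #|wslice X h a| <= 5.
  by rewrite -[5]/(code_bound 2) -hs2; apply/card_far_code/wslice_far_code.
have : \sum_(a : 'Z_14) (5 - #|wslice X h a|) == 0.
  by rewrite sumnB // sum_wslice X14 sum_nat_const card_ord.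
by rewrite sum_nat_eq0 => /forallP H a; have := H a; have := le5 a; lia.
Qed.

(* Comparing windows a and a - 1, which differ by the fibres of a and a - 5. *)
Lemma fibre_shift (h : A -> 'Z_14) X a :
  #|wslice X h a| = #|wslice X h (a - 1)%R| ->
  #|fibre X h a| = #|fibre X h (a - 5)%R|.
Proof.
rewrite !card_sep (eq_bigr _ (fun x _ => window_top a (h x))).
rewrite (eq_bigr _ (fun x _ => window_bottom a (h x))) !big_split /=.
by move/eqP; rewrite eqn_add2r => /eqP.
Qed.

Lemma fibre_singleton (h : A -> 'Z_14) hs X :
  far_code (h :: hs) X -> size hs = 2 -> #|X| = 14 -> forall j, #|fibre X h j| = 1.
Proof.
move=> Hfar hs2 X14; have full := wslice_full Hfar hs2 X14.
have const := @shift5_constant _ (fun a => #|fibre X h a|)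
  (fun a => fibre_shift (etrans (full a) (esym (full (a - 1)%R)))).
have := sum_fibre X h; under eq_bigr => j _ do rewrite const.
rewrite sum_nat_const card_ord X14 => E j; rewrite const.
by move: #|_| E => n; rewrite /Zp_trunc /=; lia.
Qed.

Lemma fibre1_inj (X : {set A}) (h : A -> 'Z_14) :
  (forall j, #|fibre X h j| = 1) -> {in X &, injective h}.
Proof.
move=> F1 x y xX yX hxy; have : #|fibre X h (h x)| <= 1 by rewrite F1.
by move/card_le1_eqP; apply; rewrite inE ?xX ?yX ?hxy eqxx.
Qed.

Lemma fibre1_surj (X : {set A}) (h : A -> 'Z_14) :
  (forall j, #|fibre X h j| = 1) -> forall j, exists x, (x \in X) && (h x == j).
Proof.
move=> F1 j; have : 0 < #|fibre X h j| by rewrite F1.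
by case/card_gt0P => x; rewrite inE; exists x.
Qed.
End WindowCounting.

Definition i0 : 'I_3 := @Ordinal 3 0 isT.
Definition i1 : 'I_3 := @Ordinal 3 1 isT.
Definition i2 : 'I_3 := @Ordinal 3 2 isT.

Lemma I3cases (i : 'I_3) : [\/ i = i0, i = i1 | i = i2].
Proof.
by case: i => [[|[|[|//]]] hi]; [apply: Or31 | apply: Or32 | apply: Or33]; apply: val_inj.
Qed.

Definition coord (i : 'I_3) (x : {ffun 'I_3 -> 'Z_14}) : 'Z_14 := x i.

Lemma independent_far S u v : independent 5 14 3 S ->
  u \in S -> v \in S -> u != v -> exists i, far (u i) (v i).
Proof.
move=> HS uS vS uv; have := HS u v uS vS.
rewrite /strong_adj uv /= negb_forall => /existsP [i].
by rewrite negb_or /circ_adj => /andP [ne]; rewrite ne /= -leqNgt -far_circ_dist; exists i.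
Qed.

Lemma independent_far_code S i : independent 5 14 3 S ->
  far_code [seq coord k | k <- i :: rem i (enum 'I_3)] S.
Proof.
move=> HS x y xS yS xy; have [k hk] := independent_far HS xS yS xy.
rewrite /far_some has_map; apply/hasP; exists k => //.
by rewrite inE (mem_rem_uniq _ (enum_uniq _)) !inE mem_enum andbT orbN.
Qed.

Lemma independent14_fibre S i j : independent 5 14 3 S -> #|S| = 14 ->
  #|fibre S (coord i) j| = 1.
Proof.
move=> HS S14; have := fibre_singleton (independent_far_code i HS).
by rewrite size_map size_rem ?mem_enum // size_enum_ord; apply.
Qed.

Lemma independent14_param S : independent 5 14 3 S -> #|S| = 14 ->
  exists P : 'Z_14 -> {ffun 'I_3 -> 'Z_14},
    [/\ S = [set P t | t : 'Z_14], forall t, P t i0 = t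
      & forall i t t', P t i = P t' i -> t = t'].
Proof.
move=> HS S14; have F i j : #|fibre S (coord i) j| = 1 := independent14_fibre i j HS S14.
pose P t := xchoose (fibre1_surj (F i0) t).
have /all_and2 [PS /(_ _)/eqP P0] t : P t \in S /\ P t i0 == t.
  exact/andP/(xchooseP (fibre1_surj (F i0) t)).
exists P; split=> //.
- apply/setP => u; apply/idP/imsetP => [uS | [t _ ->] //].
  by exists (u i0) => //; apply: (fibre1_inj (F i0)) => //; rewrite /coord P0.
- move=> i t t' e; rewrite -(P0 t) -(P0 t').
  by rewrite (fibre1_inj (F i) (PS t) (PS t') e).
Qed.

Definition valid_table (r : seq (nat * nat)) : Prop :=
  [/\ size r = 14, nth (0, 0) r 0 = (0, 0),
      forall t, t < 14 -> (nth (0, 0) r t).1 < 14 /\ (nth (0, 0) r t).2 < 14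
    & forall t j, t < 14 -> j < 14 -> t != j ->
      [/\ (nth (0, 0) r t).1 != (nth (0, 0) r j).1,
          (nth (0, 0) r t).2 != (nth (0, 0) r j).2
        & [|| farn t j, farn (nth (0, 0) r t).1 (nth (0, 0) r j).1
            | farn (nth (0, 0) r t).2 (nth (0, 0) r j).2]]].

(* Symmetry normalisation of the row t = 1. *)
Definition normal_row (x : nat * nat) : bool := (x.1 <= x.2) && (5 <= x.2 <= 7).

Definition normal_table (r : seq (nat * nat)) : bool := normal_row (nth (0, 0) r 1).

Definition candidates (p : seq (nat * nat)) : seq (nat * nat) :=
  let t := size p in
  let near := [seq nth (0, 0) p j | j <- iota 0 t & ~~ farn t j] in
  flatten [seq [seq (a, b) | b <- iota 0 14 &
                 [&& b \notin map snd p, all (farn b) [seq y.2 | y <- near & ~~ farn a y.1]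
                   & (t != 1) || normal_row (a, b)]]
          | a <- iota 0 14 & a \notin map fst p].

Fixpoint extensions (n : nat) (p : seq (nat * nat)) : seq (seq (nat * nat)) :=
  if n is n'.+1 then flatten [seq extensions n' (rcons p x) | x <- candidates p] else [:: p].
Arguments candidates : simpl never.
Arguments extensions : simpl never.

Lemma extensions_complete n p q : size q = n ->
  (forall k, k < n -> nth (0, 0) q k \in candidates (p ++ take k q)) ->
  p ++ q \in extensions n p.
Proof.
elim: n p q => [|n IH] p [|x q] //= Hs H; first by rewrite cats0 mem_seq1.
apply/flattenP; exists (extensions n (rcons p x)).
  by apply: map_f; have := H 0 isT; rewrite take0 cats0.
rewrite -cat_rcons; apply: IH => [|k Hk]; first by case: Hs.
by have := H k.+1 Hk; rewrite /= cat_rcons.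
Qed.

Lemma candidatesP p a b : a < 14 -> b < 14 ->
  a \notin map fst p -> b \notin map snd p ->
  (forall j, j < size p -> ~~ farn (size p) j ->
     farn a (nth (0, 0) p j).1 || farn b (nth (0, 0) p j).2) ->
  (size p != 1) || normal_row (a, b) -> (a, b) \in candidates p.
Proof.
move=> ha hb hA hB hF hR; apply/flattenP; exists [seq (a, b') | b' <- iota 0 14 &
   [&& b' \notin map snd p,
       all (farn b') [seq y.2 | y <- [seq nth (0, 0) p j | j <- iota 0 (size p)
                                   & ~~ farn (size p) j] & ~~ farn a y.1]
     & (size p != 1) || normal_row (a, b')]].
  by apply: (map_f (fun a => _)); rewrite mem_filter hA mem_iota ha.
apply: (map_f (fun b => _)); rewrite mem_filter mem_iota hb hB hR /= !andbT.
apply/allP => z /mapP [y]; rewrite mem_filter => /andP [nfar /mapP [j]].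
rewrite mem_filter mem_iota /= => /andP [hj hjp] Ey ->; subst y.
by have := hF j hjp hj; rewrite (negbTE nfar).
Qed.

Lemma valid_row_candidate r k : valid_table r -> normal_table r -> 0 < k < 14 ->
  nth (0, 0) r k \in candidates (take k r).
Proof.
case=> Hs _ Hb Hp Hn /andP [k0 k14].
have Hsz : size (take k r) = k by rewrite size_takel // Hs ltnW.
have Hnth j : j < k -> nth (0, 0) (take k r) j = nth (0, 0) r j.
  by move=> hj; rewrite nth_take.
have Hmem y : y \in take k r -> exists2 j, j < k & y = nth (0, 0) r j.
  move=> hy; have hi : index y (take k r) < k by rewrite -[X in _ < X]Hsz index_mem.
  by exists (index y (take k r)); rewrite // -Hnth ?nth_index.
have Hpk j : j < k -> [/\ (nth (0, 0) r k).1 != (nth (0, 0) r j).1,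
    (nth (0, 0) r k).2 != (nth (0, 0) r j).2
  & [|| farn k j, farn (nth (0, 0) r k).1 (nth (0, 0) r j).1
      | farn (nth (0, 0) r k).2 (nth (0, 0) r j).2]].
  by move=> hj; apply: Hp => //; [apply: ltn_trans hj k14 | rewrite gtn_eqF].
have [ha hb] := Hb k k14.
move: Hpk; case Ek: (nth (0, 0) r k) ha hb => [a b] /= ha hb Hpk.
apply: candidatesP => //.
- by apply/mapP => -[y /Hmem [j hj ->]] ea; case: (Hpk j hj); rewrite ea eqxx.
- by apply/mapP => -[y /Hmem [j hj ->]] eb; case: (Hpk j hj); rewrite eb eqxx.
- rewrite Hsz => j hj hfar; rewrite Hnth //.
  by case: (Hpk j hj) => _ _; rewrite (negbTE hfar).
- by rewrite Hsz; have [k1|//] := eqVneq k 1; move: Hn; rewrite /normal_table -k1 Ek.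
Qed.

Lemma valid_normal_extension r : valid_table r -> normal_table r ->
  r \in extensions 13 [:: (0, 0)].
Proof.
move=> Hv Hn; have [Hs H0 _ _] := Hv.
case: r Hs H0 Hv Hn => [Hs | x r' [Hs'] /= ->] Hv Hn; first by discriminate Hs.
apply: (extensions_complete (p := [:: (0, 0)])) Hs' _ => k hk.
rewrite -[nth _ r' k]/(nth (0, 0) ((0, 0) :: r') k.+1).
rewrite -[_ ++ take k r']/(take k.+1 ((0, 0) :: r')).
exact: valid_row_candidate.
Qed.

Definition lin_table (a b : nat) : seq (nat * nat) :=
  [seq ((k * a) %% 14, (k * b) %% 14) | k <- iota 0 14].

Lemma extensions_normal : extensions 13 [:: (0, 0)] = [:: lin_table 3 5].
Proof. vm_cast_no_check (erefl [:: lin_table 3 5]). Qed.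

Definition negm (b : bool) (a : nat) : nat := if b then (14 - a) %% 14 else a.

Definition sym (s : bool * bool * bool) (x : nat * nat) : nat * nat :=
  let: (n1, n2, sw) := s in
  let y := (negm n1 x.1, negm n2 x.2) in if sw then (y.2, y.1) else y.

Definition sym_inv (s : bool * bool * bool) : bool * bool * bool :=
  let: (n1, n2, sw) := s in if sw then (n2, n1, sw) else s.

Lemma negmP b a a' : a < 14 -> a' < 14 ->
  [/\ negm b a < 14, (negm b a == negm b a') = (a == a'),
      farn (negm b a) (negm b a') = farn a a' & negm b (negm b a) = a].
Proof.
move=> ha ha'; have /allP/(_ b) := @nat14_forall2 (fun a a' => all (fun b =>
  [&& negm b a < 14, (negm b a == negm b a') == (a == a'),
      farn (negm b a) (negm b a') == farn a a' & negm b (negm b a) == a])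
  [:: true; false]) ltac:(by vm_compute) a a' ha ha'.
by rewrite !inE; case: b => /(_ isT) /and4P [-> /eqP -> /eqP -> /eqP ->].
Qed.

Lemma sym_invK s x : x.1 < 14 -> x.2 < 14 -> sym (sym_inv s) (sym s x) = x.
Proof.
case: s x => [[n1 n2] sw] [a b] /= ha hb.
have [_ _ _ Ka] := negmP n1 ha ha; have [_ _ _ Kb] := negmP n2 hb hb.
by case: sw => /=; rewrite Ka Kb.
Qed.

Lemma valid_sym s r : valid_table r -> valid_table (map (sym s) r).
Proof.
case: s => [[n1 n2] sw] [Hs H0 Hb Hp].
have Hn t : t < 14 ->
    nth (0, 0) (map (sym (n1, n2, sw)) r) t = sym (n1, n2, sw) (nth (0, 0) r t).
  by move=> ht; rewrite (nth_map (0, 0)) // Hs.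
split.
- by rewrite size_map.
- by rewrite Hn // H0; case: sw {Hn}; case: n1; case: n2.
- move=> t ht; rewrite Hn //; have [h1 h2] := Hb t ht.
  have [l1 _ _ _] := negmP n1 h1 h1; have [l2 _ _ _] := negmP n2 h2 h2.
  by case: sw {Hn}.
- move=> t j ht hj tj; rewrite !Hn //.
  have [a1 a2] := Hb t ht; have [b1 b2] := Hb j hj.
  have [_ e1 f1 _] := negmP n1 a1 b1; have [_ e2 f2 _] := negmP n2 a2 b2.
  have [h1 h2 h3] := Hp t j ht hj tj.
  case: sw {Hn} => /=; rewrite e1 e2 f1 f2; split => //.
  by case/or3P: h3 => ->; rewrite ?orbT.
Qed.

Definition normaliser (x : nat * nat) : bool * bool * bool :=
  (7 < x.1, 7 < x.2, negm (7 < x.2) x.2 < negm (7 < x.1) x.1).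

Lemma normaliser_normal a b : a < 14 -> b < 14 -> farn a 0 || farn b 0 ->
  normal_row (sym (normaliser (a, b)) (a, b)).
Proof.
move=> ha hb; apply/implyP; move: a b ha hb.
by apply: (@nat14_forall2 (fun a b => (farn a 0 || farn b 0) ==>
  normal_row (sym (normaliser (a, b)) (a, b)))); vm_compute.
Qed.

(* The orbit of (3, 5) under the symmetries: (±3, ±5) and (±5, ±3). *)
Definition lin_pairs : seq (nat * nat) :=
  [:: (3, 5); (3, 9); (5, 3); (5, 11); (9, 3); (9, 11); (11, 5); (11, 9)].

Lemma sym_lin_table s :
  map (sym s) (lin_table 3 5) \in [seq lin_table ab.1 ab.2 | ab <- lin_pairs].
Proof. by case: s => [[[] []] []]; vm_compute. Qed.

Lemma valid_table_linear r : valid_table r ->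
  exists2 ab, ab \in lin_pairs & r = lin_table ab.1 ab.2.
Proof.
move=> Hv; have [Hs H0 Hb Hp] := Hv.
pose s := normaliser (nth (0, 0) r 1).
have Hn : normal_table (map (sym s) r).
  rewrite /normal_table (nth_map (0, 0)) ?Hs //.
  have [_ _] := Hp 1 0 isT isT isT; rewrite H0 => far10.
  have [a1 b1] := Hb 1 isT; rewrite /s.
  by case: (nth _ r 1) a1 b1 far10 => a b; apply: normaliser_normal.
have := valid_normal_extension (valid_sym s Hv) Hn.
rewrite extensions_normal mem_seq1 => /eqP E.
have Er : r = map (sym (sym_inv s)) (map (sym s) r).
  rewrite -map_comp -[LHS]map_id; apply/eq_in_map => y /(nthP (0, 0)) [t ht <-].
  by rewrite Hs in ht; have [h1 h2] := Hb t ht; rewrite [RHS]/comp sym_invK.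
have /mapP [ab ab8 Eab] := sym_lin_table (sym_inv s).
by exists ab; rewrite // Er E.
Qed.

Definition table (P : 'Z_14 -> {ffun 'I_3 -> 'Z_14}) : seq (nat * nat) :=
  [seq (val (P (inZp k) i1 - P 0 i1)%R, val (P (inZp k) i2 - P 0 i2)%R) | k <- iota 0 14].

Lemma nth_table (P : 'Z_14 -> {ffun 'I_3 -> 'Z_14}) k : k < 14 ->
  nth (0, 0) (table P) k =
  (val (P (inZp k) i1 - P 0 i1)%R, val (P (inZp k) i2 - P 0 i2)%R).
Proof. by move=> hk; rewrite (nth_map 0) ?size_iota // nth_iota. Qed.

Lemma table_valid (P : 'Z_14 -> {ffun 'I_3 -> 'Z_14}) :
  (forall t, P t i0 = t) -> (forall i t t', P t i = P t' i -> t = t') ->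
  (forall t t', t != t' -> exists i, far (P t i) (P t' i)) -> valid_table (table P).
Proof.
move=> P0 Pinj Pfar; split.
- by rewrite /table size_map size_iota.
- by rewrite nth_table // (_ : inZp 0 = 0%R) ?subrr //; apply: val_inj.
- by move=> t ht; rewrite nth_table //; split; apply: ltn_ord.
move=> t j ht hj tj; rewrite !nth_table //=.
have vt : val (inZp t : 'Z_14) = t by rewrite /= modn_small.
have vj : val (inZp j : 'Z_14) = j by rewrite /= modn_small.
have TJ : inZp t != inZp j :> 'Z_14 by apply: contra_neq tj => e; rewrite -vt -vj e.
have ne i : val (P (inZp t) i - P 0 i)%R != val (P (inZp j) i - P 0 i)%R.
  by apply: contra_neq TJ => /val_inj /addIr; apply: Pinj.
split; [exact: ne | exact: ne |].
have [i] := Pfar _ _ TJ; case: (I3cases i) => ->.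
- by rewrite !P0 /far vt vj => ->.
- by rewrite -(far_subr _ _ (P 0%R i1)) => hf; apply/or3P/Or32.
- by rewrite -(far_subr _ _ (P 0%R i2)) => hf; apply/or3P/Or33.
Qed.

Definition lin_code (ab : nat * nat) (z : {ffun 'I_3 -> 'Z_14}) :
    {set {ffun 'I_3 -> 'Z_14}} :=
  [set [ffun i : 'I_3 => (((val t * nth 0 [:: 1; ab.1; ab.2] i)%N)%:R + z i)%R]
    | t : 'Z_14].

Lemma table_lin_code (P : 'Z_14 -> {ffun 'I_3 -> 'Z_14}) ab :
  (forall t, P t i0 = t) -> table P = lin_table ab.1 ab.2 ->
  [set P t | t : 'Z_14] = lin_code ab (P 0%R).
Proof.
move=> P0 E; apply: eq_imset => t; apply/ffunP => i; rewrite ffunE.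
have := congr1 (fun r => nth (0, 0) r t) E.
rewrite nth_table // valZpK (nth_map 0) ?size_iota // nth_iota // add0n => -[E1 E2].
case: (I3cases i) => ->; first by rewrite !P0 addr0 muln1 natr_Zp.
- rewrite -[P t i1](subrK (P 0%R i1)); congr (_ + _)%R.
  by apply: ord_inj; rewrite val_Zp_nat //; exact: E1.
- rewrite -[P t i2](subrK (P 0%R i2)); congr (_ + _)%R.
  by apply: ord_inj; rewrite val_Zp_nat //; exact: E2.
Qed.

(* The Lee map for (a, b): negate coordinate 1 (resp. 2) when it carries -3
   (resp. -5), and swap coordinates 1 and 2 when a = ±5. *)
Definition lee_witness (ab : nat * nat) : bool * bool * bool :=
  let sw := (ab.1 == 5) || (ab.1 == 9) in
  let xy := if sw then (ab.2, ab.1) else ab in (xy.1 == 11, xy.2 == 5, sw).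

Definition swap12 (sw : bool) (i : nat) : nat :=
  if sw then (if i == 1 then 2 else if i == 2 then 1 else i) else i.

Lemma swap12P sw (i : 'I_3) :
  nat_of_ord ((if sw then tperm i1 i2 else 1%g : 'S_3) i) = swap12 sw i.
Proof.
case: sw; last by rewrite perm1.
by case: (I3cases i) => ->; rewrite ?tpermL ?tpermR ?tpermD.
Qed.

Lemma lee_witness_correct : all (fun ab => let: (e1, e2, sw) := lee_witness ab in
  all (fun n => all (fun i =>
    let q := ((n * nth 0 [:: 1; ab.1; ab.2] (swap12 sw i))%N%:R : 'Z_14)%R in
    (if nth false [:: false; e1; e2] i then - q else q)%R
      == ((nth 0 [:: 1; 3; 9] i)%:R * inZp n)%R)
  (iota 0 3)) (iota 0 14)) lin_pairs.
Proof. by vm_compute. Qed.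

Lemma lin_code_lee ab z : ab \in lin_pairs -> lee_equiv 14 3 (lin_code ab z) code14.
Proof.
move=> hab; case Ew: (lee_witness ab) => [[e1 e2] sw].
pose eps : {ffun 'I_3 -> bool} := [ffun i : 'I_3 => nth false [:: false; e1; e2] i].
pose s : 'S_3 := if sw then tperm i1 i2 else 1%g.
have Hs i : nat_of_ord (s i) = swap12 sw i := swap12P sw i.
pose c : {ffun 'I_3 -> 'Z_14} := [ffun i => if eps i then z (s i) else - z (s i)]%R.
exists eps, c, s; rewrite -imset_comp; apply: eq_imset => t /=.
apply/ffunP => i; rewrite !ffunE Hs.
have := allP lee_witness_correct ab hab; rewrite Ew.
move/allP/(_ t); rewrite mem_iota ltn_ord => /(_ isT).
move/allP/(_ i); rewrite mem_iota ltn_ord => /(_ isT).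
rewrite valZpK => /eqP <-.
by case: (nth false _ _); rewrite ?opprD ?addrNK ?addrK.
Qed.

Lemma far_not_adj (u v : {ffun 'I_3 -> 'Z_14}) i :
  far (u i) (v i) -> ~~ strong_adj 5 14 3 u v.
Proof.
move=> hf; rewrite /strong_adj negb_and negb_forall; apply/orP; right.
apply/existsP; exists i; have ne : u i != v i.
  by apply: contraTneq hf => ->; rewrite farxx.
by rewrite negb_or ne /circ_adj ne /= -leqNgt -far_circ_dist.
Qed.

Lemma code_separated (t t' : 'Z_14) : t != t' ->
  [|| far (1%:R * t)%R (1%:R * t')%R, far (3%:R * t)%R (3%:R * t')%R
    | far (9%:R * t)%R (9%:R * t')%R].
Proof.
apply/implyP; move: t t'.
by apply: (@Z14_forall2 (fun t t' => (t != t') ==>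
  [|| far (1%:R * t) (1%:R * t'), far (3%:R * t) (3%:R * t') | far (9%:R * t) (9%:R * t')]%R));
  vm_compute.
Qed.

Lemma code14_independent : independent 5 14 3 code14.
Proof.
move=> u v /imsetP [t _ ->] /imsetP [t' _ ->].
have [-> | tt'] := eqVneq t t'; first by rewrite /strong_adj eqxx.
by case/or3P: (code_separated tt') => hf;
  [apply: (far_not_adj (i := i0)) | apply: (far_not_adj (i := i1))
  | apply: (far_not_adj (i := i2))]; rewrite !ffunE.
Qed.

Lemma card_code14 : #|code14| = 14.
Proof.
rewrite card_imset ?card_ord // => t t' /ffunP /(_ i0).
by rewrite !ffunE /= !mul1r.
Qed.

Lemma independent14_lee S : independent 5 14 3 S -> #|S| = 14 ->
  lee_equiv 14 3 S code14.
Proof.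
move=> HS S14; have [P [SP P0 Pinj]] := independent14_param HS S14.
have Pfar t t' : t != t' -> exists i, far (P t i) (P t' i).
  move=> tt'; apply: (independent_far HS); rewrite ?SP ?imset_f //.
  by apply: contra_neq tt' => e; rewrite -(P0 t) -(P0 t') e.
have [ab hab Eab] := valid_table_linear (table_valid P0 Pinj Pfar).
by rewrite SP (table_lin_code P0 Eab); apply: lin_code_lee.
Qed.

Theorem proposition9p6 :
  (independent 5 14 3 code14 /\ #|code14| = 14%N) /\
  (forall S : {set {ffun 'I_3 -> 'Z_14}},
     independent 5 14 3 S -> #|S| = 14%N -> lee_equiv 14 3 S code14).
Proof.
split; last exact: independent14_lee.
by split; [exact: code14_independent | exact: card_code14].
Qed.
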